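(* Let $C_n=(V,E)$ be the cycle graph on $n\ge 3$ vertices. Then two distinct vertices $\mathbf v(X),\mathbf v(Y)$ of $\mathrm{CUT}(C_n)$ are adjacent if and only if $|\delta(X\triangle Y)|=2$ (equivalently, the Hamming distance between $\mathbf v(X)$ and $\mathbf v(Y)$ is $2$). Moreover, the 1-skeleton of $\mathrm{CUT}(C_n)$ contains a clique of size $n=|E|$; hence $\omega(\mathrm{CUT}(C_n))\ge |E|$.
   Context: For an undirected graph $G=(V,E)$ and $S\subseteq V$, $\delta(S)\subseteq E$ denotes the set of edges with exactly one endpoint in $S$, and $\mathbf v(S)\in\{0,1\}^{E}$ is its incidence vector ($v(S)_e=1$ iff $e\in\delta(S)$). The cut polytope is $\mathrm{CUT}(G)=\operatorname{conv}\{\mathbf v(S):S\subseteq V\}\subset\mathbb R^{E}$. The 1-skeleton of a polytope is the graph whose vertices are the polytope's vertices and whose edges are its one-dimensional faces; $\omega$ denotes its clique number. $X\triangle Y$ denotes symmetric difference. *)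

From HB Require Import structures.
From mathcomp Require Import all_boot all_order all_algebra.
From mathcomp Require Import reals.
Set Implicit Arguments. Unset Strict Implicit. Unset Printing Implicit Defensive.
Import Order.TTheory GRing.Theory Num.Theory.
Local Open Scope ring_scope.

(* Cycle graph C_n: vertex set 'I_n, edge set indexed by 'I_n,
   edge e joins vertex e and vertex (e+1 mod n). *)
Definition cnext (n : nat) (i : 'I_n) : 'I_n :=
  Ordinal (ltn_pmod i.+1 (leq_ltn_trans (leq0n i) (ltn_ord i))).

Definition cdelta (n : nat) (S : {set 'I_n}) : {set 'I_n} :=
  [set e : 'I_n | (e \in S) != (cnext e \in S)].

Definition cutvec (R : realType) (n : nat) (S : {set 'I_n}) : 'rV[R]_n :=
  \row_(e < n) (if e \in cdelta S then 1 else 0).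

Definition CUT (R : realType) (n : nat) (x : 'rV[R]_n) : Prop :=
  exists lam : {ffun {set 'I_n} -> R},
    (forall S, 0 <= lam S) /\ \sum_S lam S = 1 /\
    x = \sum_S lam S *: cutvec R S.

Definition dotv (R : realType) (n : nat) (c x : 'rV[R]_n) : R :=
  \sum_(i < n) c ord0 i * x ord0 i.

Definition is_face (R : realType) (n : nat) (Q F : 'rV[R]_n -> Prop) : Prop :=
  exists (c : 'rV[R]_n) (d : R),
    (forall x, Q x -> dotv c x <= d) /\
    (forall x, F x <-> (Q x /\ dotv c x = d)).

Definition is_vertex (R : realType) (n : nat) (Q : 'rV[R]_n -> Prop) (p : 'rV[R]_n) :=
  is_face Q (fun x => x = p).

Definition segment (R : realType) (n : nat) (a b : 'rV[R]_n) (x : 'rV[R]_n) : Prop :=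
  exists t : R, 0 <= t <= 1 /\ x = (1 - t) *: a + t *: b.

Definition adjacent (R : realType) (n : nat) (Q : 'rV[R]_n -> Prop) (a b : 'rV[R]_n) :=
  [/\ is_vertex Q a, is_vertex Q b, a <> b & is_face Q (segment a b)].

From HB Require Import structures.
From mathcomp Require Import all_boot all_order all_algebra.
From mathcomp Require Import reals.
From mathcomp Require Import zify ring lra.
Set Implicit Arguments. Unset Strict Implicit. Unset Printing Implicit Defensive.
Import Order.TTheory GRing.Theory Num.Theory.
Local Open Scope ring_scope.

(* The vertex v(X) maximizes the functional that is +1 on delta X and -1
   elsewhere; zeroing it on D = delta (X △ Y) gives a functional maximized
   exactly by the cuts S with delta (S △ X) ⊆ D.  Cuts of a cycle have even
   size, so when |D| = 2 the maximizers are v(X) and v(Y), and [v(X), v(Y)] is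
   an edge.  When |D| >= 4, flipping X and Y along a cut Z with
   delta Z = {i, j} ⊆ D preserves v(X) + v(Y) but moves v(X △ Z) off the
   segment, which therefore is not a face.  The prefix sets {1, ..., k},
   k < n, pairwise differ by an arc, whose cut has two edges: an n-clique. *)

Lemma sum_ler_eq (R : numDomainType) (I : finType) (F G : I -> R) :
  (forall i, F i <= G i) -> \sum_i F i = \sum_i G i -> forall i, F i = G i.
Proof.
move=> FleG eqFG i; apply/eqP; rewrite eq_sym -subr_eq0; apply/eqP.
have ge0 j : predT j -> 0 <= G j - F j by rewrite subr_ge0.
by apply: (psumr_eq0P ge0); rewrite // sumrB eqFG subrr.
Qed.

Section Dot.
Variables (R : realType) (n : nat).
Implicit Types c x y : 'rV[R]_n.

Lemma dotvD c x y : dotv c (x + y) = dotv c x + dotv c y.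
Proof. by rewrite /dotv -big_split; apply: eq_bigr => i _; rewrite mxE mulrDr. Qed.

Lemma dotvZ c x r : dotv c (r *: x) = r * dotv c x.
Proof. by rewrite /dotv mulr_sumr; apply: eq_bigr => i _; rewrite mxE mulrCA. Qed.

Lemma dotv_sum c (I : finType) (lam : I -> R) (F : I -> 'rV[R]_n) :
  dotv c (\sum_i lam i *: F i) = \sum_i lam i * dotv c (F i).
Proof.
rewrite /dotv; under eq_bigr => k _ do rewrite summxE mulr_sumr.
rewrite exchange_big; apply: eq_bigr => i _; rewrite mulr_sumr.
by apply: eq_bigr => k _; rewrite mxE mulrCA.
Qed.

End Dot.

Section ConvexHull.
Variables (R : realType) (n : nat) (I : finType) (p : I -> 'rV[R]_n).

Definition hull (x : 'rV[R]_n) : Prop :=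
  exists lam : {ffun I -> R},
    (forall i, 0 <= lam i) /\ \sum_i lam i = 1 /\ x = \sum_i lam i *: p i.

Lemma hull_valid c d x :
  (forall i, dotv c (p i) <= d) -> hull x -> dotv c x <= d.
Proof.
move=> valid [lam [lam_ge0 [lam_sum1 ->]]]; rewrite dotv_sum.
rewrite -[d]mul1r -lam_sum1 mulr_suml.
by apply: ler_sum => i _; apply: ler_wpM2l.
Qed.

Lemma hull_segment i j t :
  0 <= t <= 1 -> hull ((1 - t) *: p i + t *: p j).
Proof.
case/andP=> t_ge0 t_le1.
exists [ffun k => (if k == i then 1 - t else 0) + (if k == j then t else 0)].
split; [|split].
- by move=> k; rewrite ffunE; case: (k == i); case: (k == j); lra.
- under eq_bigr => k _ do rewrite ffunE.
  by rewrite big_split -!big_mkcond !big_pred1_eq /=; ring.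
- under eq_bigr => k _ do rewrite ffunE scalerDl !(fun_if (fun r => r *: p k)) scale0r.
  by rewrite big_split -!big_mkcond !big_pred1_eq.
Qed.

Lemma hull_point i : hull (p i).
Proof. by have := @hull_segment i i 0; rewrite subr0 scale1r scale0r addr0 lexx ler01; apply. Qed.

Lemma hull_face c d (F : 'rV[R]_n -> Prop) :
  (forall i, dotv c (p i) <= d) ->
  (forall x, F x -> hull x /\ dotv c x = d) ->
  (forall lam : {ffun I -> R}, (forall i, 0 <= lam i) -> \sum_i lam i = 1 ->
     (forall i, lam i != 0 -> dotv c (p i) = d) -> F (\sum_i lam i *: p i)) ->
  is_face hull F.
Proof.
move=> valid F_tight supported; exists c, d; split=> [x|x].
  exact: hull_valid.
split; first exact: F_tight.
case=> -[lam [lam_ge0 [lam_sum1 ->]]] tight; apply: supported => // i lam_i.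
have: lam i * dotv c (p i) = lam i * d.
  apply: (@sum_ler_eq _ _ (fun k => lam k * dotv c (p k)) (fun k => lam k * d)).
    by move=> k; apply: ler_wpM2l.
  by rewrite -dotv_sum tight -mulr_suml lam_sum1 mul1r.
by move/mulfI; apply.
Qed.

Lemma hull_vertex c i0 :
  (forall i, dotv c (p i) <= dotv c (p i0)) ->
  (forall i, dotv c (p i) = dotv c (p i0) -> p i = p i0) ->
  is_vertex hull (p i0).
Proof.
move=> valid tight_eq; apply: (hull_face valid) => [x ->|lam _ lam_sum1 supp].
  by split; first exact: hull_point.
transitivity (\sum_i lam i *: p i0); last by rewrite -scaler_suml lam_sum1 scale1r.
apply: eq_bigr => i _; have [->|lam_i] := eqVneq (lam i) 0; first by rewrite !scale0r.
by rewrite tight_eq // supp.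
Qed.

Lemma hull_segment_face c i0 i1 :
  (forall i, dotv c (p i) <= dotv c (p i0)) ->
  dotv c (p i1) = dotv c (p i0) ->
  (forall i, dotv c (p i) = dotv c (p i0) -> p i = p i0 \/ p i = p i1) ->
  is_face hull (segment (p i0) (p i1)).
Proof.
move=> valid tight1 tight_ends; apply: (hull_face valid).
  move=> x [t [t01 ->]]; split; first exact: hull_segment.
  by rewrite dotvD !dotvZ tight1; ring.
move=> lam lam_ge0 lam_sum1 supp.
pose t := \sum_i (if p i == p i1 then lam i else 0).
exists t; split.
  apply/andP; split; first by apply: sumr_ge0 => i _; case: ifP.
  by rewrite -lam_sum1; apply: ler_sum => i _; case: ifP.
have -> : 1 - t = \sum_i (if p i == p i1 then 0 else lam i).
  by rewrite -lam_sum1 -sumrB; apply: eq_bigr => i _; case: ifP => _; ring.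
rewrite !scaler_suml -big_split; apply: eq_bigr => i _ /=.
case: eqP => [->|ne1]; first by rewrite scale0r add0r.
have [->|lam_i] := eqVneq (lam i) 0; first by rewrite !scale0r addr0.
by have [->|//] := tight_ends i (supp i lam_i); rewrite scale0r addr0.
Qed.

(* Both summands of a decomposition [p a + p b = p c + p e] are tight for any
   inequality defining the edge [[p a, p b]], hence lie on it. *)
Lemma face_segment_exchange a b c e :
  is_face hull (segment (p a) (p b)) -> p a + p b = p c + p e ->
  segment (p a) (p b) (p c).
Proof.
move=> [w [d [valid face]]] sum_eq.
have on_face x : segment (p a) (p b) x -> dotv w x = d by move/face=> [].
have tight_a : dotv w (p a) = d.
  by apply: on_face; exists 0; rewrite lexx ler01 subr0 scale1r scale0r addr0.
have tight_b : dotv w (p b) = d.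
  by apply: on_face; exists 1; rewrite lexx ler01 subrr scale0r scale1r add0r.
have /(congr1 (dotv w)) := sum_eq; rewrite !dotvD tight_a tight_b => dsum.
have le_c := valid _ (hull_point c); have le_e := valid _ (hull_point e).
by apply/face; split; [exact: hull_point | lra].
Qed.

End ConvexHull.

Lemma segment_mixed_coords (R : realType) n (a b x : 'rV[R]_n) i k :
  segment a b x -> a ord0 i != b ord0 i -> a ord0 k != b ord0 k ->
  x ord0 i = b ord0 i -> x ord0 k = a ord0 k -> False.
Proof.
move=> [t [_ ->]] ab_i ab_k; rewrite !mxE => x_i x_k.
have: (1 - t) * (a ord0 i - b ord0 i) = 0.
  by rewrite -[RHS](subrr (b ord0 i)) -{2}x_i; ring.
have: t * (b ord0 k - a ord0 k) = 0.
  by rewrite -[RHS](subrr (a ord0 k)) -{2}x_k; ring.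
move=> /eqP; rewrite mulf_eq0 subr_eq0 [b _ _ == _]eq_sym (negbTE ab_k) orbF => /eqP ->.
by move/eqP; rewrite subr0 mul1r subr_eq0 (negbTE ab_i).
Qed.

Section SymmetricDifference.
Variable T : finType.
Implicit Types A B C : {set T}.

Definition symdiff A B : {set T} := A :\: B :|: B :\: A.

Lemma in_symdiff A B x : (x \in symdiff A B) = ((x \in A) != (x \in B)).
Proof. by rewrite !inE; case: (x \in A); case: (x \in B). Qed.

Lemma symdiffC A B : symdiff A B = symdiff B A.
Proof. exact: setUC. Qed.

Lemma symdiff_eq0 A B : (symdiff A B == set0) = (A == B).
Proof.
apply/eqP/eqP => [/setP AB|->]; apply/setP => x.
  by move: (AB x); rewrite in_symdiff inE => /negbFE/eqP.
by rewrite in_symdiff inE eqxx.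
Qed.

Lemma symdiff_inj C : injective (symdiff^~ C).
Proof.
move=> A B /setP AB; apply/setP => x.
by move: (AB x); rewrite !in_symdiff; case: (x \in A); case: (x \in B); case: (x \in C).
Qed.

Lemma odd_card_symdiff A B : odd #|symdiff A B| = odd #|A| (+) odd #|B|.
Proof.
have disj : (A :\: B) :&: (B :\: A) = set0.
  by apply/setP => x; rewrite !inE; case: (x \in A); case: (x \in B).
have := cardsUI (A :\: B) (B :\: A); rewrite disj cards0 addn0 -/(symdiff A B) => ->.
rewrite -(cardsID B A) -(cardsID A B) setIC !oddD.
by case: (odd #|B :&: A|); case: (odd _); case: (odd _).
Qed.

End SymmetricDifference.

Section CycleCuts.
Variables (R : realType) (n : nat).
Implicit Types D X Y S Z : {set 'I_n}.

Lemma cnextE (i : 'I_n) : val (cnext i) = if i.+1 == n then 0%N else i.+1.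
Proof.
rewrite /cnext /=; case: eqP => [->|ne]; first by rewrite modnn.
by rewrite modn_small //; have := ltn_ord i; lia.
Qed.

Lemma cnext_inj : injective (@cnext n).
Proof.
move=> i j /(congr1 val); rewrite !cnextE => eq_next; apply/val_inj => /=.
by have := ltn_ord i; have := ltn_ord j; move: eq_next; case: eqP; case: eqP => /=; lia.
Qed.

Lemma cdelta_symdiff X Y : cdelta (symdiff X Y) = symdiff (cdelta X) (cdelta Y).
Proof.
apply/setP => e; rewrite !(inE, in_symdiff).
by case: (e \in X); case: (e \in Y); case: (cnext e \in X); case: (cnext e \in Y).
Qed.

(* [delta S] is the symmetric difference of [S] and its rotation, which has
   the same size as [S]. *)
Lemma odd_card_cdelta S : ~~ odd #|cdelta S|.
Proof.
have -> : cdelta S = symdiff S (@cnext n @^-1: S).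
  by apply/setP => e; rewrite in_symdiff !inE.
by rewrite odd_card_symdiff card_preimset ?addbb //; apply: cnext_inj.
Qed.

Lemma cutvecE S e : cutvec R S ord0 e = (e \in cdelta S)%:R.
Proof. by rewrite mxE; case: (e \in cdelta S). Qed.

Lemma cutvec_eq X Y : cutvec R X = cutvec R Y <-> cdelta X = cdelta Y.
Proof.
split=> [XY|XY]; last by rewrite /cutvec XY.
apply/setP => e; move/matrixP: XY => /(_ ord0 e); rewrite !cutvecE.
by move/eqP; rewrite eqr_nat; case: (e \in cdelta X); case: (e \in cdelta Y).
Qed.

Lemma cutvec_symdiffD X Y Z : cdelta Z \subset cdelta (symdiff X Y) ->
  cutvec R (symdiff X Z) + cutvec R (symdiff Y Z) = cutvec R X + cutvec R Y.
Proof.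
move=> /subsetP ZsubXY; apply/matrixP => i e; rewrite [i]ord1 !mxE.
rewrite !cdelta_symdiff !in_symdiff.
case Ze: (e \in cdelta Z); last by case: (e \in cdelta X); case: (e \in cdelta Y).
move: (ZsubXY e Ze); rewrite cdelta_symdiff in_symdiff.
by case: (e \in cdelta X); case: (e \in cdelta Y) => //= _; rewrite addrC.
Qed.

Definition agreement D X : 'rV[R]_n :=
  \row_e (if e \in D then 0 else if e \in cdelta X then 1 else -1).

Lemma agreement_term_le D X S e :
  agreement D X ord0 e * cutvec R S ord0 e <= agreement D X ord0 e * cutvec R X ord0 e.
Proof. by rewrite !mxE; case: (e \in D); case: (e \in cdelta X); case: (e \in cdelta S); lra. Qed.

Lemma dotv_agreement_le D X S :
  dotv (agreement D X) (cutvec R S) <= dotv (agreement D X) (cutvec R X).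
Proof. by apply: ler_sum => e _; apply: agreement_term_le. Qed.

Lemma dotv_agreement_eq D X S :
  dotv (agreement D X) (cutvec R S) = dotv (agreement D X) (cutvec R X) <->
  cdelta (symdiff S X) \subset D.
Proof.
rewrite cdelta_symdiff; split=> [tight|/subsetP SXsubD].
  apply/subsetP => e; rewrite in_symdiff; apply: contraR => eD.
  have := sum_ler_eq (agreement_term_le D X S) tight e; rewrite !mxE (negbTE eD).
  by case: (e \in cdelta X); case: (e \in cdelta S) => //=; lra.
apply: eq_bigr => e _; rewrite !mxE; case: ifP => [_|eD]; first by rewrite !mul0r.
have := contraFN (SXsubD e) eD; rewrite in_symdiff negbK => /eqP ->.
by case: (e \in cdelta X).
Qed.

Lemma CUT_hullE : @CUT R n = hull (@cutvec R n).
Proof. by []. Qed.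

Lemma is_vertex_cutvec X : is_vertex (@CUT R n) (cutvec R X).
Proof.
rewrite CUT_hullE; apply: (hull_vertex (c := agreement set0 X)) => S.
  exact: dotv_agreement_le.
move/dotv_agreement_eq; rewrite subset0 cdelta_symdiff symdiff_eq0 => /eqP.
by move/cutvec_eq.
Qed.

Lemma is_face_segment_cutvec X Y : #|cdelta (symdiff X Y)| = 2%N ->
  is_face (@CUT R n) (segment (cutvec R X) (cutvec R Y)).
Proof.
set D := cdelta (symdiff X Y) => card_D.
rewrite CUT_hullE; apply: (hull_segment_face (c := agreement D X)) => [S||S].
- exact: dotv_agreement_le.
- by apply/dotv_agreement_eq; rewrite symdiffC.
move/dotv_agreement_eq; set E := cdelta (symdiff S X) => EsubD.
have [E0|E2] : #|E| = 0%N \/ #|E| = 2%N.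
  have := odd_card_cdelta (symdiff S X); have := subset_leq_card EsubD.
  by rewrite card_D -/E; case: #|E| => [|[|[|]]]; auto.
- left; apply/cutvec_eq/eqP; rewrite -symdiff_eq0 -cdelta_symdiff -/E.
  by apply/eqP/cards0_eq.
- have E_D : E = D by apply/eqP; rewrite eqEcard EsubD E2 card_D leqnn.
  right; apply/cutvec_eq; apply: (@symdiff_inj _ (cdelta X)).
  by rewrite -!cdelta_symdiff -/E E_D /D symdiffC.
Qed.

Definition itv (a b : nat) : {set 'I_n} := [set v : 'I_n | (a < v <= b)%N].

Lemma in_cdelta_itv a b e : (a < b < n)%N ->
  (e \in cdelta (itv a b)) = (val e == a) || (val e == b).
Proof.
move=> /andP[ab bn]; rewrite !inE cnextE; have := ltn_ord e.
by case: ifP => /eqP; rewrite -[val e]/(nat_of_ord e); lia.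
Qed.

Lemma card_cdelta_itv a b : (a < b < n)%N -> #|cdelta (itv a b)| = 2%N.
Proof.
move=> abn; have /andP[ab bn] := abn; have an : (a < n)%N by lia.
rewrite (_ : cdelta (itv a b) = [set Ordinal an; Ordinal bn]) ?cards2; last first.
  by apply/setP => e; rewrite in_cdelta_itv // !inE -!val_eqE.
by rewrite -val_eqE /= neq_ltn ab.
Qed.

Lemma symdiff_itv a b c : (a <= b <= c)%N -> symdiff (itv a b) (itv a c) = itv b c.
Proof. by move=> abc; apply/setP => e; rewrite in_symdiff !inE; lia. Qed.

Lemma cdelta_pair (i j : 'I_n) : i != j -> exists Z, cdelta Z = [set i; j].
Proof.
move=> ij; exists (itv (minn i j) (maxn i j)); apply/setP => e.
have ij' : nat_of_ord i != j by [].
by rewrite in_cdelta_itv ?inE -?val_eqE /=; have := ltn_ord i; have := ltn_ord j; lia.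
Qed.

(* Flipping the cut [Z], with [delta Z = {i, j}] inside [delta (X △ Y)], maps
   [v(X) + v(Y)] to itself; the flipped [v(X △ Z)] agrees with [v(Y)] at [i]
   and with [v(X)] at a third edge [k], so it is off the segment. *)
Lemma card_cdelta_adjacent X Y :
  adjacent (@CUT R n) (cutvec R X) (cutvec R Y) -> #|cdelta (symdiff X Y)| = 2%N.
Proof.
case=> _ _ XneY; rewrite CUT_hullE => edge; set D := cdelta (symdiff X Y).
have D_neq0 : #|D| != 0%N.
  apply: contra_notN XneY => /eqP/cards0_eq/eqP.
  by rewrite /D cdelta_symdiff symdiff_eq0 => /eqP/cutvec_eq.
apply/eqP/negPn/negP => D_neq2.
have: (2 < #|D|)%N.
  move: D_neq0 D_neq2 (odd_card_cdelta (symdiff X Y)).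
  by rewrite -/D; case: #|D| => [|[|[|]]].
case/card_gt2P => [i [j [k [[iD jD kD] [ij jk ki]]]]].
have [Z cdeltaZ] := cdelta_pair ij.
have ZsubD : cdelta Z \subset D by rewrite cdeltaZ subUset !sub1set iD jD.
have on_edge := face_segment_exchange edge (esym (cutvec_symdiffD ZsubD)).
have differ e : e \in D -> cutvec R X ord0 e != cutvec R Y ord0 e.
  by rewrite /D cdelta_symdiff in_symdiff !cutvecE eqr_nat; case: (_ \in _); case: (_ \in _).
apply: (segment_mixed_coords on_edge (differ _ iD) (differ _ kD)).
- move: iD; rewrite /D !cutvecE !cdelta_symdiff !in_symdiff cdeltaZ in_set2 eqxx.
  by case: (i \in cdelta X); case: (i \in cdelta Y).
- rewrite !cutvecE cdelta_symdiff in_symdiff cdeltaZ in_set2 (negbTE ki).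
  by rewrite eq_sym in jk; rewrite (negbTE jk); case: (k \in cdelta X).
Qed.

Lemma cutvec_neq_of_card X Y : #|cdelta (symdiff X Y)| = 2%N -> cutvec R X <> cutvec R Y.
Proof.
move=> card2 /cutvec_eq/eqP; rewrite -symdiff_eq0 -cdelta_symdiff => /eqP D0.
by move: card2; rewrite D0 cards0.
Qed.

Lemma adjacent_cutvec_of_card X Y : #|cdelta (symdiff X Y)| = 2%N ->
  adjacent (@CUT R n) (cutvec R X) (cutvec R Y).
Proof.
move=> card2; split; [exact: is_vertex_cutvec | exact: is_vertex_cutvec | |].
  exact: cutvec_neq_of_card.
exact: is_face_segment_cutvec.
Qed.

Lemma card_cdelta_symdiff_itv0 k l : (k < n)%N -> (l < n)%N -> k != l ->
  #|cdelta (symdiff (itv 0 k) (itv 0 l))| = 2%N.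
Proof.
wlog kl : k l / (k < l)%N => [hwlog k_n l_n|_ l_n _].
  rewrite neq_ltn => /orP[kl|lk]; first by apply: hwlog => //; rewrite neq_ltn kl.
  by rewrite symdiffC; apply: hwlog => //; rewrite neq_ltn lk.
by rewrite symdiff_itv ?card_cdelta_itv ?kl ?l_n ?(ltnW kl).
Qed.

End CycleCuts.

Theorem mainTheorem7 (R : realType) (n : nat) (hn : (3 <= n)%N) :
  (forall X Y : {set 'I_n},
      cutvec R X <> cutvec R Y ->
      (adjacent (@CUT R n) (cutvec R X) (cutvec R Y) <->
       #|cdelta (X :\: Y :|: Y :\: X)| = 2%N)) /\
  (exists K : seq 'rV[R]_n,
      size K = n /\ uniq K /\
      (forall a, a \in K -> is_vertex (@CUT R n) a) /\
      (forall a b, a \in K -> b \in K -> a <> b -> adjacent (@CUT R n) a b)).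
Proof.
split=> [X Y _|].
  by split; [exact: card_cdelta_adjacent | exact: adjacent_cutvec_of_card].
have prefix_pair k l : k \in iota 0 n -> l \in iota 0 n -> k != l ->
    #|cdelta (symdiff (itv n 0 k) (itv n 0 l))| = 2%N.
  by rewrite !mem_iota !add0n; exact: card_cdelta_symdiff_itv0.
exists [seq cutvec R (itv n 0 k) | k <- iota 0 n]; split; [|split; [|split]].
- by rewrite size_map size_iota.
- rewrite map_inj_in_uniq ?iota_uniq // => k l k_in l_in; apply: contra_eq => kl.
  exact/eqP/cutvec_neq_of_card/prefix_pair.
- by move=> _ /mapP[k _ ->]; exact: is_vertex_cutvec.
move=> _ _ /mapP[k k_in ->] /mapP[l l_in ->] neq.
apply: adjacent_cutvec_of_card; apply: prefix_pair => //.
by apply/eqP => kl; apply: neq; congr (cutvec R (itv n 0 _)).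
Qed.
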